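(* Let $X$, $\partial X$ be Banach spaces, $A_m:D(A_m)\subseteq X\to X$ a closed linear operator, $L\in\mathcal{L}(X,\partial X)$ surjective, $A_0\subseteq A_m$ with $D(A_0):=D(A_m)\cap\ker(L)$, and $B:D(B)\subseteq X\to\partial X$ relatively $A_0$-bounded. For $\lambda\in\rho(A_0)$ let $L^{A_m}_\lambda:=(L|_{\ker(\lambda-A_m)})^{-1}\in\mathcal{L}(\partial X,X)$ and define $N^{A_m}_\lambda x:=BL^{A_m}_\lambda x$, $D(N^{A_m}_\lambda):=\{x\in\partial X:L^{A_m}_\lambda x\in D(B)\}$. Let $P:D(P)\subseteq X\to X$ be relatively $A_m$-bounded, let $A_0+P$ have domain $D(A_0)$, and let $\lambda\in\rho(A_0)\cap\rho(A_0+P)$. Then the Dirichlet operator $L^{A_m+P}_\lambda:=(L|_{\ker(\lambda-A_m-P)})^{-1}\in\mathcal{L}(\partial X,X)$ exists, so that $N^{A_m+P}_\lambda x:=BL^{A_m+P}_\lambda x$ with $D(N^{A_m+P}_\lambda):=\{x:L^{A_m+P}_\lambda x\in D(B)\}$ is defined; moreover $D(N^{A_m}_\lambda)=D(N^{A_m+P}_\lambda)$ and the difference $N^{A_m}_\lambda-N^{A_m+P}_\lambda$ is bounded on this common domain.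
   Context: $B$ relatively $A_0$-bounded means $D(A_0)\subseteq D(B)$ and $\|Bf\|\le a\|A_0f\|+b\|f\|$ for $f\in D(A_0)$. $P$ relatively $A_m$-bounded means $D(A_m)\subseteq D(P)$ and $\|Pf\|\le a\|A_mf\|+b\|f\|$ for $f\in D(A_m)$. *)

(* Unbounded operators T : D(T) ⊆ X -> Y are modelled
   as a pair (domain : set X, action : X -> Y); values outside the domain are
   irrelevant. *)
From HB Require Import structures.
From mathcomp Require Import all_boot all_order all_algebra.
From mathcomp Require Import all_classical all_reals all_analysis.
From mathcomp Require Export complex.
Set Implicit Arguments. Unset Strict Implicit. Unset Printing Implicit Defensive.
Import Order.TTheory GRing.Theory Num.Theory.
Import numFieldNormedType.Exports.
Local Open Scope classical_set_scope.
Local Open Scope ring_scope.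

Section Ops.
Variable K : numFieldType.

Definition subspace (V : lmodType K) (D : set V) : Prop :=
  D 0 /\ forall (a : K) (x y : V), D x -> D y -> D (a *: x + y).

Definition lin_op (V W : lmodType K) (D : set V) (T : V -> W) : Prop :=
  subspace D /\
  forall (a : K) (x y : V), D x -> D y -> T (a *: x + y) = a *: T x + T y.

Definition closed_op (V W : normedModType K) (D : set V) (T : V -> W) : Prop :=
  closed [set p : V * W | D p.1 /\ p.2 = T p.1].

Definition in_resolvent (V : normedModType K) (D : set V) (T : V -> V)
    (l : K) : Prop :=
  exists Rl : {linear V -> V}, continuous Rl /\
    (forall y, D (Rl y) /\ l *: Rl y - T (Rl y) = y) /\
    (forall x, D x -> Rl (l *: x - T x) = x).

Definition rel_bounded (V W U : normedModType K) (DS : set V) (S : V -> W)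
    (DT : set V) (T : V -> U) : Prop :=
  DT `<=` DS /\
  exists a b : K, 0 <= a /\ 0 <= b /\
    forall f, DT f -> `|S f| <= a * `|T f| + b * `|f|.

Definition dirichlet_op (V Y : normedModType K) (D : set V) (T : V -> V)
    (L : V -> Y) (l : K) (Dl : {linear Y -> V}) : Prop :=
  continuous Dl /\
  (forall x, D (Dl x) /\ l *: Dl x - T (Dl x) = 0 /\ L (Dl x) = x) /\
  (forall u, D u -> l *: u - T u = 0 -> Dl (L u) = u).

End Ops.

(* Put L^{A_m+P}_λ := L^{A_m}_λ + R(λ, A_0 + P) P L^{A_m}_λ. The second
   summand repairs the defect (λ - A_m - P) L^{A_m}_λ = - P L^{A_m}_λ without
   changing boundary values, and it takes values in D(A_0) ⊆ D(B); this gives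
   the common domain. The difference of the two operators N is then
   - B R(λ, A_0 + P) P L^{A_m}_λ. Here P L^{A_m}_λ is bounded because
   A_m L^{A_m}_λ = λ L^{A_m}_λ, and B R(λ, A_0 + P) is bounded because B is
   A_0-bounded and A_m R(λ, A_0 + P) is bounded by the closed graph theorem,
   A_m being closed. *)

From Pilot Require Import Defs.
From HB Require Import structures.
From mathcomp Require Import all_boot all_order all_algebra.
From mathcomp Require Import all_classical all_reals all_analysis.
From mathcomp Require Import complex.
From mathcomp Require Import ring lra.
Set Implicit Arguments. Unset Strict Implicit. Unset Printing Implicit Defensive.
Import Order.TTheory GRing.Theory Num.Theory.
Import numFieldNormedType.Exports.
Local Open Scope classical_set_scope.
Local Open Scope ring_scope.
Local Open Scope complex_scope.

(* Restriction of scalars: the library proves Baire's theorem for real normed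
   spaces only. *)
Section realified.
Variables (R : realType) (V : normedModType R[i]).

Definition realified : Type := V.

HB.instance Definition _ := GRing.Zmodule.on realified.

Let rscale (a : R) (x : realified) : realified := (a%:C *: (x : V)).

Let rscaleA a b x : rscale a (rscale b x) = rscale (a * b) x.
Proof. by rewrite /rscale scalerA rmorphM. Qed.

Let rscale1 : left_id 1 rscale.
Proof. by move=> x; rewrite /rscale scale1r. Qed.

Let rscaleDr : right_distributive rscale +%R.
Proof. by move=> a x y; rewrite /rscale scalerDr. Qed.

Let rscaleDl x : {morph rscale^~ x : a b / a + b}.
Proof. by move=> a b; rewrite /rscale rmorphD scalerDl. Qed.

HB.instance Definition _ := GRing.Zmodule_isLmodule.Build R realified
  rscaleA rscale1 rscaleDr rscaleDl.

Definition rnorm (x : V) : R := complex.Re `|x|.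

Lemma rnormE (x : V) : `|x| = (rnorm x)%:C.
Proof. by rewrite /rnorm RRe_real // normr_real. Qed.

Let rnormD (x y : realified) : rnorm (x + y) <= rnorm x + rnorm y.
Proof. by rewrite -lecR rmorphD /= -!rnormE; exact: ler_normD. Qed.

Let rnormZ (a : R) (x : realified) : rnorm (a *: x) = `|a| * rnorm x.
Proof.
apply: complexI; rewrite rmorphM /= -!rnormE normrZ.
by rewrite normc_def /= expr0n addr0 sqrtr_sqr.
Qed.

Let rnorm0_eq0 (x : realified) : rnorm x = 0 -> x = 0.
Proof. by move=> h; apply/normr0_eq0; rewrite rnormE h. Qed.

HB.instance Definition _ := Lmodule_isNormed.Build R realified
  rnormD rnormZ rnorm0_eq0.

Lemma realified_ballE (x : V) (e : R) : ball (x : realified) e = ball x e%:C.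
Proof.
by rewrite -!ball_normE /ball_; apply/funext => y /=; rewrite rnormE ltcR.
Qed.

Lemma realified_nbhsE (x : V) : nbhs (x : realified) = nbhs x.
Proof.
apply/funext => A; apply/propext; rewrite -!nbhs_ballE /nbhs_ball_ /filter_from.
split=> [[e e0 eA]|[e e0 eA]].
  by exists e%:C; rewrite /= ?ltcR // -realified_ballE.
have eE := RRe_real (gtr0_real e0).
by exists (complex.Re e); rewrite /= -?ltcR ?eE // realified_ballE eE.
Qed.

Lemma realified_cvgE (T : Type) (F : set_system T) (f : T -> V) (x : V) :
  (f @ F --> (x : realified)) = (f @ F --> x).
Proof. by rewrite /cvg_to /= realified_nbhsE. Qed.

End realified.

Section realified_complete.
Variables (R : realType) (V : completeNormedModType R[i]).

Let realified_cauchy_cvg (F : set_system (realified V)) :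
  ProperFilter F -> cauchy F -> cvg F.
Proof.
move=> FF /cauchyP FR.
have /cauchy_cvg /cvg_ex [l Fl] : cauchy (F : set_system V).
  apply: cauchy_exP => e e0.
  have eE := RRe_real (gtr0_real e0).
  rewrite -eE ltcR in e0 *.
  by have [x Fx] := FR _ e0; exists x; rewrite -realified_ballE.
by apply/cvg_ex; exists (l : realified V) => A; rewrite realified_nbhsE => /Fl.
Qed.

HB.instance Definition _ := Uniform_isComplete.Build (realified V)
  realified_cauchy_cvg.

End realified_complete.

Definition bounded_op (K : numFieldType) (V W : normedModType K) (f : V -> W) :=
  exists2 k : K, 0 <= k & forall x, `|f x| <= k * `|x|.

Section lin_op.
Variables (K : numFieldType) (V W : lmodType K) (D : set V).

Lemma subspaceD : Defs.subspace D -> forall x y, D x -> D y -> D (x + y).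
Proof. by move=> [_ DZ] x y Dx Dy; have := DZ 1 x y Dx Dy; rewrite scale1r. Qed.

Lemma subspaceB : Defs.subspace D -> forall x y, D x -> D y -> D (x - y).
Proof.
by move=> [_ DZ] x y Dx Dy; have := DZ (-1) y x Dy Dx; rewrite scaleN1r addrC.
Qed.

Lemma lin_opD (T : V -> W) : lin_op D T ->
  forall x y, D x -> D y -> T (x + y) = T x + T y.
Proof.
by move=> [_ TZ] x y Dx Dy; have := TZ 1 x y Dx Dy; rewrite !scale1r.
Qed.

End lin_op.

Section bounded_op.
Variables (K : numFieldType) (U V W Z : normedModType K).

Lemma continuous_bounded_op (f : {linear V -> W}) :
  continuous f -> bounded_op f.
Proof.
move=> /(_ 0) /(continuous_linear_bounded 0) /linear_boundedP /pinfty_ex_gt0.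
by move=> [k k0 fk]; exists k => //; exact: ltW.
Qed.

Lemma bounded_op_continuous (f : {linear V -> W}) :
  bounded_op f -> continuous f.
Proof.
move=> [k k0 fk]; apply/bounded_linear_continuous/linear_boundedP.
near=> r => x; apply: le_trans (fk x) _; rewrite ler_wpM2r //.
by near: r; apply: nbhs_pinfty_ge; exact: ger0_real.
Unshelve. all: by end_near. Qed.

Lemma bounded_op_comp (f : V -> W) (g : U -> V) :
  bounded_op f -> bounded_op g -> bounded_op (f \o g).
Proof.
move=> [kf kf0 fk] [kg kg0 gk]; exists (kf * kg) => [|x]; first exact: mulr_ge0.
by apply: le_trans (fk _) _; rewrite -mulrA ler_wpM2l.
Qed.

Lemma rel_bounded_comp (DS : set V) (S : V -> W) (DT : set V) (T : V -> Z)
    (F : U -> V) :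
  rel_bounded DS S DT T -> (forall u, DT (F u)) ->
  bounded_op (T \o F) -> bounded_op F -> bounded_op (S \o F).
Proof.
move=> [_ [a [b [a0 [b0 ST]]]]] DTF [kT kT0 TF] [kF kF0 Fk].
exists (a * kT + b * kF) => [|u]; first by rewrite addr_ge0 ?mulr_ge0.
apply: le_trans (ST _ (DTF u)) _; rewrite mulrDl -!mulrA.
exact: lerD (ler_wpM2l a0 (TF u)) (ler_wpM2l b0 (Fk u)).
Qed.

Lemma bounded_opD (f g : V -> W) :
  bounded_op f -> bounded_op g -> bounded_op (f \+ g).
Proof.
move=> [kf kf0 fk] [kg kg0 gk]; exists (kf + kg) => [|x]; first exact: addr_ge0.
by rewrite mulrDl; apply: le_trans (ler_normD _ _) (lerD (fk x) (gk x)).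
Qed.

End bounded_op.

Section closed_graph.
Variables (R : realType) (X Y : completeNormedModType R) (T : {linear X -> Y}).
Hypothesis T_closed : forall (u : X ^nat) (x : X) (z : Y),
  u @ \oo --> x -> T \o u @ \oo --> z -> T x = z.

Let level (n : nat) := [set s : X | `|T s| <= n%:R].

Let level_closure_ball : exists n (x0 : X) (r : R),
  0 < r /\ ball x0 r `<=` closure (level n).
Proof.
have [n not_dense] : exists n, ~ dense (~` closure (level n)).
  apply: contrapT => /forallNP all_dense.
  have /Baire : forall n,
      open (~` closure (level n)) /\ dense (~` closure (level n)).
    move=> n; split; first exact/closed_openC/closed_closure.
    exact: contrapT (all_dense n).
  move=> /(_ setT (ex_intro _ 0 I) openT) [x [_ /(_ (Num.truncn `|T x|).+1 I)]].
  by apply; apply/subset_closure/ltW; rewrite Num.Theory.truncnS_gt.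
have [W [[x0 /open_nbhs_nbhs/nbhs_ballP [r r0 rW]] W_closure]] :=
  denseNE not_dense.
exists n, x0, r; split => // y /rW Wy; apply: contrapT => ncl.
by have : (W `&` ~` closure (level n)) y by []; rewrite W_closure.
Qed.

Let level_approx : exists2 M : R, 0 <= M &
  forall y, exists s, `|T s| <= M * `|y| /\ `|y - s| <= `|y| / 2.
Proof.
have [n [x0 [r [r0 x0_closure]]]] := level_closure_ball.
have approx y : ball x0 r y -> exists2 s, `|T s| <= n%:R & `|y - s| < r / 8.
  have r8 : 0 < r / 8 by rewrite divr_gt0.
  move=> /x0_closure /(_ _ (nbhsx_ballx _ _ r8)) [s [Ls ys]].
  by exists s; move: ys; rewrite -ball_normE.
exists (4 * n%:R / r).
  by apply: divr_ge0; [rewrite mulr_ge0 | exact: ltW].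
move=> y; have [->|y0] := eqVneq y 0.
  by exists 0; rewrite linear0 subrr !normr0 mulr0 mul0r.
have y_gt0 : 0 < `|y| by rewrite normr_gt0.
pose d := 2 * `|y| / r.
have d_gt0 : 0 < d by rewrite divr_gt0 ?mulr_gt0.
have y'_norm : `|d^-1 *: y| = r / 2.
  by rewrite normrZ gtr0_norm ?invr_gt0 // /d; field; rewrite !gt_eqF.
have [s1 Ts1 s1_close] : exists2 s1, `|T s1| <= n%:R &
    `|x0 + d^-1 *: y - s1| < r / 8.
  by apply: approx; rewrite -ball_normE /= opprD addNKr normrN y'_norm; lra.
have [s2 Ts2 s2_close] := approx x0 (ballxx _ r0).
(* x0 + d^-1 y and x0 both lie in the ball, so s1 - s2 approximates d^-1 y. *)
exists (d *: (s1 - s2)); split.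
  rewrite linearZ linearB normrZ gtr0_norm //.
  have := ler_normB (T s1) (T s2).
  have -> : 4 * n%:R / r * `|y| = d * (2 * n%:R).
    by rewrite /d; field; rewrite gt_eqF.
  by move=> ?; rewrite ler_pM2l //; lra.
have -> : y - d *: (s1 - s2) = d *: ((x0 + d^-1 *: y - s1) - (x0 - s2)).
  rewrite [in RHS]opprB [_ - s1 + _]addrC addrA subrKA.
  rewrite scalerBr !scalerDr scalerA mulfV ?gt_eqF // scale1r scalerN.
  by rewrite opprB addrA [y + _]addrC.
rewrite normrZ gtr0_norm //.
have := ler_normB (x0 + d^-1 *: y - s1) (x0 - s2).
have -> : `|y| / 2 = d * (r / 4) by rewrite /d; field; rewrite gt_eqF.
by move=> ?; rewrite ler_pM2l //; lra.
Qed.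

Let series_decomposition : exists2 M : R, 0 <= M & forall y, exists u : X ^nat,
  series u @ \oo --> y /\ forall k, `|T (u k)| <= geometric (M * `|y|) 2^-1 k.
Proof.
have [M M0 /choice [g gP]] := level_approx.
exists M => // y.
pose res k := iter k (fun z => z - g z) y.
have res_norm k : `|res k| <= geometric `|y| 2^-1 k.
  elim: k => [|k IH] /=; first by rewrite expr0 mulr1.
  have [_ res_half] := gP (res k).
  by move: IH => /=; rewrite exprS; lra.
exists (g \o res); split => [|k].
  have res_cvg0 : res @ \oo --> 0.
    apply/norm_cvg0P/(@squeeze_cvgr _ _ _ _ (cst 0) (geometric `|y| 2^-1)).
    - by near=> k; rewrite normr_ge0 res_norm.
    - exact: cvg_cst.
    - by apply: cvg_geometric; rewrite gtr0_norm // invf_lt1 // ltr1n.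
  have -> : series (g \o res) = fun n => y - res n.
    apply/funext; elim=> [|n IH]; first by rewrite /series /= big_geq ?subrr.
    by rewrite seriesSr IH /= opprB addrA addrAC.
  by rewrite -[y in _ --> y]subr0; apply: cvgB => //; exact: cvg_cst.
have [Tg _] := gP (res k).
by apply: le_trans Tg _; rewrite /= -mulrA ler_wpM2l.
Unshelve. all: by end_near. Qed.

Theorem closed_graph_bounded : bounded_op T.
Proof.
have [M M0 decomp] := series_decomposition.
exists (M * 2) => [|y]; first by rewrite mulr_ge0.
have [u [u_sum Tu_le]] := decomp y.
have geo_half : `|2^-1 : R| < 1 by rewrite gtr0_norm // invf_lt1 // ltr1n.
have geo_sum := @cvg_geometric_series _ (M * `|y|) _ geo_half.
have Tu_normed : cvgn [normed series (T \o u)].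
  apply: series_le_cvg Tu_le _; [by [] | | exact: cvgP geo_sum].
  by move=> k; rewrite geometric_ge0 ?mulr_ge0.
have -> : T y = limn (series (T \o u)).
  apply: T_closed u_sum _; have -> : T \o series u = series (T \o u).
    by apply/funext => n; rewrite /= /series /= linear_sum.
  exact: normed_cvg Tu_normed.
apply: le_trans (lim_series_norm Tu_normed) _.
have -> : M * 2 * `|y| = limn (series (geometric (M * `|y|) 2^-1)).
  by rewrite (cvg_lim _ geo_sum) //; field.
apply: lim_series_le Tu_normed (cvgP _ geo_sum) Tu_le.
Qed.

End closed_graph.

Theorem closed_graph_bounded_complex (R : realType)
    (X Y : completeNormedModType R[i]) (T : {linear X -> Y}) :
  (forall (u : X ^nat) (x : X) (z : Y),
    u @ \oo --> x -> T \o u @ \oo --> z -> T x = z) ->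
  bounded_op T.
Proof.
move=> T_closed.
have T_rlinear : linear (T : realified X -> realified Y).
  by move=> a x y; exact: linearP.
pose Tr : {linear realified X -> realified Y} :=
  HB.pack (T : realified X -> realified Y)
    (GRing.isLinear.Build _ _ _ _ _ T_rlinear).
have [|M M0 TM] := closed_graph_bounded (T := Tr).
  by move=> u x z; rewrite !realified_cvgE; exact: T_closed.
exists M%:C => [|y]; first by rewrite lecR.
by rewrite !rnormE -rmorphM lecR; exact: TM.
Qed.

Section dirichlet_perturbation.
Variables (R : realType) (X dX : completeNormedModType R[i]).
Variables (DAm : set X) (Am : X -> X) (L : {linear X -> dX}).
Variables (DP : set X) (P : X -> X) (l : R[i]).
Variables (DLAm : {linear dX -> X}) (Rl : {linear X -> X}).
Hypotheses (Am_lin : lin_op DAm Am) (Am_closed : closed_op DAm Am).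
Hypotheses (P_lin : lin_op DP P) (P_bounded : rel_bounded DP P DAm Am).
Hypothesis DLAm_dir : dirichlet_op DAm Am L l DLAm.
Hypothesis Rl_cont : continuous Rl.
Hypothesis Rl_range : forall y, (DAm `&` [set x | L x = 0]) (Rl y) /\
  l *: Rl y - (Am (Rl y) + P (Rl y)) = y.
Hypothesis Rl_inv : forall x, (DAm `&` [set x | L x = 0]) x ->
  Rl (l *: x - (Am x + P x)) = x.

Let S x := l *: x - (Am x + P x).

Let SD x y : DAm x -> DAm y -> S (x + y) = S x + S y.
Proof.
move=> Dx Dy; have [DP_Am _] := P_bounded.
rewrite /S scalerDr (lin_opD Am_lin Dx Dy).
rewrite (lin_opD P_lin (DP_Am _ Dx) (DP_Am _ Dy)).
by rewrite addrACA opprD addrACA.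
Qed.

Let DLAm_mem x : DAm (DLAm x).
Proof. by have [_ [/(_ x) []]] := DLAm_dir. Qed.

Let Am_DLAm x : Am (DLAm x) = l *: DLAm x.
Proof. by have [_ [/(_ x) [_ [/subr0_eq]]]] := DLAm_dir. Qed.

Let S_DLAm x : S (DLAm x) = - P (DLAm x).
Proof. by rewrite /S opprD addrA Am_DLAm subrr add0r. Qed.

Let S_Rl y : S (Rl y) = y.
Proof. exact: (Rl_range y).2. Qed.

Let Rl_D0 y : DAm (Rl y) /\ L (Rl y) = 0.
Proof. exact: (Rl_range y).1. Qed.

Let DLAm_bounded : bounded_op DLAm.
Proof. exact/continuous_bounded_op/DLAm_dir.1. Qed.

Lemma P_dirichlet_bounded : bounded_op (P \o DLAm).
Proof.
apply: rel_bounded_comp P_bounded DLAm_mem _ DLAm_bounded.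
have [k k0 DLAm_k] := DLAm_bounded.
exists (`|l| * k) => [|x]; first by rewrite mulr_ge0.
by rewrite /= Am_DLAm normrZ -mulrA ler_wpM2l.
Qed.

Lemma Am_resolvent_bounded : bounded_op (Am \o Rl).
Proof.
have Am_Rl_lin : linear (Am \o Rl).
  move=> a x y; rewrite /= linearP.
  by apply: Am_lin.2; exact: (Rl_D0 _).1.
pose T : {linear X -> X} :=
  HB.pack (Am \o Rl) (GRing.isLinear.Build _ _ _ _ _ Am_Rl_lin).
suff : bounded_op T by [].
apply: closed_graph_bounded_complex => u x z u_x Am_Rl_u_z.
have Rl_u : Rl \o u @ \oo --> Rl x := cvg_comp _ _ u_x (@Rl_cont x).
have graph_cvg : (fun n => (Rl (u n), Am (Rl (u n)))) @ \oo --> (Rl x, z).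
  exact: cvg_pair Rl_u Am_Rl_u_z.
have : [set p : X * X | DAm p.1 /\ p.2 = Am p.1] (Rl x, z).
  apply: (closed_cvg _ Am_closed _ _ graph_cvg).
  by apply: filterE => n; split; first exact: (Rl_D0 _).1.
by case.
Qed.

Lemma perturbed_dirichlet : exists2 G : {linear dX -> X},
  dirichlet_op DAm (fun x => Am x + P x) L l G &
  forall x, G x = DLAm x + Rl (P (DLAm x)).
Proof.
have [Am_sub _] := Am_lin; have [DP_Am _] := P_bounded.
have [_ [DLAm_L _]] := DLAm_dir.
have G_lin : linear (fun x => DLAm x + Rl (P (DLAm x))).
  move=> a x y /=; rewrite scalerDr addrACA.
  congr (_ + _); first exact: linearP.
  have DP_DLAm z : DP (DLAm z) := DP_Am _ (DLAm_mem z).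
  by rewrite (linearP DLAm) P_lin.2; [exact: linearP | exact: DP_DLAm..].
pose G : {linear dX -> X} := HB.pack (fun x => DLAm x + Rl (P (DLAm x)))
  (GRing.isLinear.Build _ _ _ _ _ G_lin).
have GE x : G x = DLAm x + Rl (P (DLAm x)) by [].
exists G => //; split; [|split] => [|x|w Dw Sw].
- apply: bounded_op_continuous; apply: bounded_opD DLAm_bounded _.
  exact: bounded_op_comp (continuous_bounded_op Rl_cont) P_dirichlet_bounded.
- have [D_corr L_corr] := Rl_D0 (P (DLAm x)).
  rewrite GE; split; first exact (subspaceD Am_sub (DLAm_mem x) D_corr).
  split; last by rewrite linearD L_corr addr0; have [_ []] := DLAm_L x.
  change (S (DLAm x + Rl (P (DLAm x))) = 0).
  by rewrite SD ?S_DLAm ?S_Rl ?addNr //; exact: DLAm_mem.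
- pose u := DLAm (L w); pose z := w - u.
  have [_ [_ Lu]] := DLAm_L (L w).
  have Dz : DAm z by exact (subspaceB Am_sub Dw (DLAm_mem _)).
  have Lz : L z = 0 by rewrite linearB /= Lu subrr.
  have wE : u + z = w by rewrite /z addrC subrK.
  have Sz : S z = P u.
    have : S u + S z = 0 by rewrite -(SD (DLAm_mem _) Dz) wE.
    by rewrite S_DLAm addrC => /subr0_eq.
  by rewrite GE -/u -Sz Rl_inv.
Qed.

Lemma B_correction_bounded (DB : set X) (B : X -> dX) :
  rel_bounded DB B (DAm `&` [set x | L x = 0]) Am ->
  bounded_op (fun x => B (Rl (P (DLAm x)))).
Proof.
move=> B_bounded; apply: (bounded_op_comp (f := B \o Rl)) P_dirichlet_bounded.
apply: rel_bounded_comp B_bounded Rl_D0 Am_resolvent_bounded _.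
exact: continuous_bounded_op.
Qed.

End dirichlet_perturbation.

Theorem proposition4p7 (R : realType)
  (X dX : completeNormedModType R[i])
  (DAm : set X) (Am : X -> X)
  (L : {linear X -> dX})
  (DB : set X) (B : X -> dX)
  (DP : set X) (P : X -> X)
  (l : R[i])
  (DLAm : {linear dX -> X}) :
  (* A_m closed linear operator *)
  lin_op DAm Am -> closed_op DAm Am ->
  (* L ∈ L(X, ∂X) surjective *)
  continuous L -> (forall y : dX, exists x : X, L x = y) ->
  (* B relatively A_0-bounded, A_0 = A_m restricted to D(A_m) ∩ ker L *)
  lin_op DB B ->
  rel_bounded DB B (DAm `&` [set x | L x = 0]) Am ->
  (* P relatively A_m-bounded *)
  lin_op DP P -> rel_bounded DP P DAm Am ->
  (* λ ∈ ρ(A_0) ∩ ρ(A_0 + P), with D(A_0 + P) = D(A_0) *)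
  in_resolvent (DAm `&` [set x | L x = 0]) Am l ->
  in_resolvent (DAm `&` [set x | L x = 0]) (fun x => Am x + P x) l ->
  (* L^{A_m}_λ := (L|_{ker(λ - A_m)})^{-1} ∈ L(∂X, X) *)
  dirichlet_op DAm Am L l DLAm ->
  exists DLAmP : {linear dX -> X},
    (* L^{A_m+P}_λ := (L|_{ker(λ - A_m - P)})^{-1} ∈ L(∂X, X) exists *)
    dirichlet_op DAm (fun x => Am x + P x) L l DLAmP /\
    (* D(N^{A_m}_λ) = D(N^{A_m+P}_λ) *)
    (forall x : dX, DB (DLAm x) <-> DB (DLAmP x)) /\
    (* N^{A_m}_λ - N^{A_m+P}_λ is bounded on the common domain *)
    (exists c : R[i], 0 <= c /\
       forall x : dX, DB (DLAm x) ->
         `|B (DLAm x) - B (DLAmP x)| <= c * `|x|).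
Proof.
(* Continuity and surjectivity of L and λ ∈ ρ(A_0) only serve to construct
   L^{A_m}_λ, which is given here. *)
move=> Am_lin Am_closed _ _ B_lin B_bounded P_lin P_bounded _
  [Rl [Rl_cont [Rl_range Rl_inv]]] DLAm_dir.
have [G G_dir GE] :=
  perturbed_dirichlet Am_lin P_lin P_bounded DLAm_dir Rl_cont Rl_range Rl_inv.
have [c c0 Bc] := B_correction_bounded Am_lin Am_closed P_bounded DLAm_dir
  Rl_cont Rl_range B_bounded.
have DB_corr x : DB (Rl (P (DLAm x))).
  by apply: B_bounded.1; have [] := Rl_range (P (DLAm x)).
exists G; split=> //; split=> [x|]; rewrite ?GE.
  split=> DBx; first exact (subspaceD B_lin.1 DBx (DB_corr x)).
  by have := subspaceB B_lin.1 DBx (DB_corr x); rewrite addrK.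
exists c; split=> // x DBx; rewrite GE (lin_opD B_lin DBx (DB_corr x)).
by rewrite opprD addrA subrr add0r normrN; exact: Bc.
Qed.
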